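(* Let $3\le k\le n-1$ and let $T$ be a tree attaining the maximum value of $M_2$ over $\mathcal{CT}_{n,k}$. If $T$ contains a pendent vertex adjacent to a branching vertex, then $T$ contains no pendent path of length greater than $2$.
   Context: A chemical tree is a tree with maximum degree at most $4$. A pendent vertex has degree $1$; a branching vertex has degree greater than $2$. A pendent path is a path $u_0\cdots u_r$ ($r\ge1$) with $u_0$ pendent, $u_r$ branching and all internal vertices of degree $2$; its length is $r$. A segment of a tree is a path of positive length neither of whose end vertices has degree $2$ and all of whose internal vertices have degree $2$. $\mathcal{CT}_{n,k}$ is the class of all $n$-vertex chemical trees with exactly $k$ segments. $M_2(G)=\sum_{uv\in E(G)}d_ud_v$, where $d_v$ is the degree of $v$. *)

From mathcomp Require Import all_boot.
Set Implicit Arguments. Unset Strict Implicit. Unset Printing Implicit Defensive.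

Section Defs.
Variable n : nat.
Implicit Types (e : rel 'I_n).

Definition deg e (v : 'I_n) : nat := #|[set w | e v w]|.

Definition simple_graph e : Prop := symmetric e /\ irreflexive e.

Definition connected e : Prop := forall x y : 'I_n, connect e x y.

Definition acyclic e : Prop :=
  forall c : seq 'I_n, uniq c -> 3 <= size c -> ~~ cycle e c.

Definition is_tree e : Prop := [/\ simple_graph e, connected e & acyclic e].

Definition chemical_tree e : Prop := is_tree e /\ forall v, deg e v <= 4.

Definition path_deg2_internal e (p : seq 'I_n) : bool :=
  if p is x :: q then
    [&& q != [::], uniq p, path e x q &
        all (fun v => (v == x) || (v == last x q) || (deg e v == 2)) p]
  else false.

(* segment: neither end vertex has degree 2; oriented canonically
   (first end < last end) so each segment is represented exactly once *)
Definition is_segment e (p : seq 'I_n) : bool :=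
  if p is x :: q then
    [&& path_deg2_internal e p, deg e x != 2, deg e (last x q) != 2 &
        (x < last x q)%N]
  else false.

Definition num_segments_eq e (k : nat) : Prop :=
  exists S : seq (seq 'I_n),
    [/\ uniq S, (forall p, p \in S = is_segment e p) & size S = k].

Definition CT e (k : nat) : Prop := chemical_tree e /\ num_segments_eq e k.

Definition M2 e : nat :=
  \sum_(u : 'I_n) \sum_(v : 'I_n | (u < v)%N && e u v) deg e u * deg e v.

(* pendent path u0 ... ur (r >= 1): u0 pendent, ur branching, internal deg 2;
   its length is r = size p - 1 *)
Definition is_pendent_path e (p : seq 'I_n) : bool :=
  if p is x :: q then
    [&& path_deg2_internal e p, deg e x == 1 & 2 < deg e (last x q)]
  else false.

End Defs.

From mathcomp Require Import all_boot zify.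
Set Implicit Arguments. Unset Strict Implicit. Unset Printing Implicit Defensive.

(* Let u0 u1 u2 u3 ... be a pendent path of length at least 3 and w a pendent
   vertex adjacent to a branching vertex v.  Detaching u0 from u1 and hanging it
   on w gives again a chemical tree.  Only the segments through u0, u1 or w
   change: the pendent path u0 u1 u2 ... and the segment w v become the pendent
   path u1 u2 ... and the segment u0 w v, so the number of segments is the same.
   The edge weights d_x d_y that change are those of u0u1, u1u2, wv, namely
   2, 4, d_v, which become those of u0w, u1u2, wv, namely 2, 2, 2 d_v.  Hence M2
   grows by d_v - 2 > 0, contradicting maximality. *)

Lemma rev_cons_belast (T : Type) (x : T) s : rev (x :: s) = last x s :: rev (belast x s).
Proof. by rewrite lastI rev_rcons. Qed.

Lemma last_rev_belast (T : Type) (x : T) s : last (last x s) (rev (belast x s)) = x.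
Proof. by case: s => [|y s] //=; rewrite rev_cons last_rcons. Qed.

Section Graphs.
Variable n : nat.
Implicit Types (e : rel 'I_n) (a b x y z : 'I_n) (q s : seq 'I_n).

Lemma eq_deg e1 e2 x : e1 x =1 e2 x -> deg e1 x = deg e2 x.
Proof. by move=> exy; apply: eq_card => y; rewrite !inE exy. Qed.

Lemma deg_neq e x y : deg e x != deg e y -> x != y.
Proof. by apply: contraNneq => ->. Qed.

Lemma deg_nbrs e x s : uniq s -> (forall y, e x y = (y \in s)) -> deg e x = size s.
Proof.
move=> s_uniq nbrs; rewrite /deg -(card_uniqP s_uniq) -cardsE.
by apply: eq_card => y; rewrite !inE nbrs.
Qed.

Lemma nbrs_of_deg_le e x s : uniq s -> deg e x <= size s -> (forall y, y \in s -> e x y) ->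
  forall y, e x y = (y \in s).
Proof.
move=> s_uniq deg_le s_nbrs y.
have sub : [set y in s] \subset [set y | e x y].
  by apply/subsetP => z; rewrite !inE => /s_nbrs.
have /eqP/setP/(_ y) : [set y in s] == [set y | e x y].
  rewrite eqEcard sub /=; apply: leq_trans deg_le _.
  by rewrite cardsE; move/card_uniqP: s_uniq => ->.
by rewrite !inE => ->.
Qed.

Lemma deg1_nbrs e x y : deg e x = 1 -> e x y -> forall z, e x z = (z \in [:: y]).
Proof. by move=> dx exy; apply: nbrs_of_deg_le => [||z]; rewrite ?dx // inE => /eqP ->. Qed.

Lemma deg2_nbrs e x y z : deg e x = 2 -> e x y -> e x z -> y != z ->
  forall t, e x t = (t \in [:: y; z]).
Proof.
move=> dx exy exz yz; apply: nbrs_of_deg_le => [||t]; rewrite ?dx //= ?inE ?yz //.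
by case/orP => /eqP ->.
Qed.

Lemma path_interior_nbrs e x q y : symmetric e -> path e x q -> uniq (x :: q) ->
  y \in q -> y != last x q ->
  exists a b, [/\ a \in x :: q, b \in x :: q, a != b, e y a & e y b].
Proof.
move=> e_sym + + y_q; case/splitPr: y_q => l r.
rewrite cat_path last_cat -cat_cons cat_uniq => /and3P [_ ey er] /and3P [_ disj _].
case: r => [|b r] /= in er disj *; first by rewrite eqxx.
case/andP: er => eyb _ _; exists (last x l), b; split.
- by rewrite -cat_cons mem_cat mem_last.
- by rewrite -cat_cons mem_cat !inE eqxx !orbT.
- by apply: contraNneq disj => <-; rewrite mem_last orbT.
- by rewrite e_sym.
- exact: eyb.
Qed.

Lemma leaf_path_end e x q y : symmetric e -> path e x q -> uniq (x :: q) ->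
  deg e y = 1 -> y \in q -> y = last x q.
Proof.
move=> e_sym xq_path xq_uniq dy y_q; apply/eqP; apply: contraT => y_last.
have [a [b [_ _ ab eya]]] := path_interior_nbrs e_sym xq_path xq_uniq y_q y_last.
by rewrite (deg1_nbrs dy eya) inE eq_sym (negbTE ab).
Qed.

Lemma deg2_path_nbr e x q y z : symmetric e -> path e x q -> uniq (x :: q) ->
  y \in q -> y != last x q -> deg e y = 2 -> e y z -> z \in x :: q.
Proof.
move=> e_sym xq_path xq_uniq y_q y_last dy.
have [a [b [a_in b_in ab eya eyb]]] := path_interior_nbrs e_sym xq_path xq_uniq y_q y_last.
by rewrite (deg2_nbrs dy eya eyb ab) !inE => /orP [] /eqP ->.
Qed.

Lemma path_deg2_internal_inner_deg e x q v : path_deg2_internal e (x :: q) ->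
  v \in q -> v != x -> v != last x q -> deg e v = 2.
Proof.
case/and4P=> _ _ _ /allP/(_ v) deg_v v_q vx v_last.
by apply/eqP; move: deg_v; rewrite inE v_q orbT (negbTE vx) (negbTE v_last); apply.
Qed.

Lemma path_deg2_internal_second_deg e x y z c :
  path_deg2_internal e [:: x, y, z & c] -> deg e y = 2.
Proof.
move=> xyzc; have /and4P [_ /andP [x_yzc /andP [y_zc _]] _ _] := xyzc.
apply: (path_deg2_internal_inner_deg xyzc); first exact: mem_head.
- by apply: contraNneq x_yzc => <-; apply: mem_head.
- by apply: contraNneq y_zc => /= ->; apply: mem_last.
Qed.

Lemma path_deg2_internal_behead e x y z c :
  path_deg2_internal e [:: x, y, z & c] -> path_deg2_internal e [:: y, z & c].
Proof.
move=> /and4P [_ /andP [x_yzc yzc_uniq] /andP [_ yzc_path] /allP ends].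
apply/and4P; split=> //; apply/allP => v v_yzc.
have := ends v; rewrite inE v_yzc orbT => /(_ isT) /=.
have /negbTE -> : v != x by apply: contraNneq x_yzc => <-.
by rewrite /= => /orP [] ->; rewrite ?orbT.
Qed.

Lemma path_deg2_internal_unique e x y q q' : symmetric e ->
  path_deg2_internal e [:: x, y & q] -> deg e (last y q) != 2 ->
  path_deg2_internal e [:: x, y & q'] -> deg e (last y q') != 2 -> q = q'.
Proof.
move=> e_sym; elim: q x y q' => [|z q IH] x y [|z' q'] // xyzq end_q xyzq' end_q'.
- by rewrite /= (path_deg2_internal_second_deg xyzq') in end_q.
- by rewrite /= (path_deg2_internal_second_deg xyzq) in end_q'.
have [exy eyz] : e y x /\ e y z.
  by case/and4P: xyzq => _ _ /andP [exy /andP [eyz _]]; rewrite e_sym.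
have xz : x != z.
  have /and4P [_ /andP [x_yzq _] _ _] := xyzq.
  by apply: contraNneq x_yzq => ->; rewrite !inE eqxx orbT.
have z'z : z' = z.
  have /and4P [_ /andP [x_yzq' _] /andP [_ /andP [eyz' _]] _] := xyzq'.
  move: eyz'; rewrite (deg2_nbrs (path_deg2_internal_second_deg xyzq) exy eyz xz) !inE.
  by case/orP=> /eqP // z'x; move: x_yzq'; rewrite z'x !inE eqxx orbT.
subst z'; have := IH y z q' (path_deg2_internal_behead xyzq) end_q.
by move=> /(_ (path_deg2_internal_behead xyzq') end_q') ->.
Qed.

Lemma path_deg2_internal_rev e x q : symmetric e ->
  path_deg2_internal e (x :: q) -> path_deg2_internal e (rev (x :: q)).
Proof.
move=> e_sym /and4P [q_nil xq_uniq xq_path ends]; rewrite rev_cons_belast.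
apply/and4P; split.
- by rewrite -size_eq0 size_rev size_belast size_eq0.
- by rewrite -rev_cons_belast rev_uniq.
- by rewrite rev_path (eq_path (_ : (fun y => e^~ y) =2 e)) // => y z; apply: e_sym.
- rewrite last_rev_belast -rev_cons_belast all_rev; apply: sub_all ends => v.
  by case/orP=> [/orP [] | ] ->; rewrite ?orbT.
Qed.

Definition chain e s : bool :=
  if s is x :: q then
    [&& path_deg2_internal e s, deg e x != 2 & deg e (last x q) != 2]
  else false.

Definition orient s : seq 'I_n :=
  if s is x :: q then (if (x < last x q)%N then s else rev s) else s.

Lemma mem_orient s : orient s =i s.
Proof. by case: s => [|x q] //= y; case: ifP; rewrite ?mem_rev. Qed.

Lemma segment_chain e s : is_segment e s -> chain e s.
Proof. by case: s => [|x q] // /and4P [*]; apply/and3P. Qed.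

Lemma segment_orient_id e s : is_segment e s -> orient s = s.
Proof. by case: s => [|x q] // /and4P [_ _ _ lt]; rewrite /= lt. Qed.

Lemma chain_rev e s : symmetric e -> chain e s -> chain e (rev s).
Proof.
case: s => [|x q] // e_sym /and3P [xq dx dl].
move: (path_deg2_internal_rev e_sym xq); rewrite rev_cons_belast /= => ->.
by rewrite last_rev_belast dx dl.
Qed.

Lemma chain_ends_neq e x q : chain e (x :: q) -> x != last x q :> nat.
Proof.
case/and3P=> /and4P [q_nil /andP [x_q _] _ _] _ _.
by apply: contraNneq x_q => /val_inj ->; case: q q_nil => //= y q _; apply: mem_last.
Qed.

Lemma orient_rev e s : chain e s -> orient (rev s) = orient s.
Proof.
case: s => [|x q] // xq; have := chain_ends_neq xq.
rewrite /orient rev_cons_belast last_rev_belast -rev_cons_belast revK.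
by case: ltngtP.
Qed.

Lemma orient_segment e s : symmetric e -> chain e s -> is_segment e (orient s).
Proof.
case: s => [|x q] // e_sym xq; rewrite /orient; case: ltnP => [x_lt|l_le].
  by case/and3P: xq => *; apply/and4P.
move: (chain_rev e_sym xq); rewrite rev_cons_belast /= last_rev_belast.
by case/and3P=> -> -> ->; rewrite ltn_neqAle eq_sym (chain_ends_neq xq).
Qed.

Lemma chain_deg2_closed e s y z : symmetric e -> chain e s ->
  y \in s -> deg e y = 2 -> e y z -> z \in s.
Proof.
case: s => [|x q] // e_sym /and3P [/and4P [_ xq_uniq xq_path _] dx dl].
rewrite in_cons => /orP [/eqP y_x | y_q] dy; first by rewrite -y_x dy in dx.
by apply: deg2_path_nbr => //; apply: contra_neq dl => <-; rewrite dy.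
Qed.

Lemma leaf_chain_unique e x q q' : symmetric e -> deg e x = 1 ->
  chain e (x :: q) -> chain e (x :: q') -> q = q'.
Proof.
case: q q' => [|y a] [|y' a'] e_sym dx; do ?by case/and3P=> /and4P [].
case/and3P=> xya _ end_a /and3P [xya' _ end_a'].
have exy : e x y by case/and4P: xya => _ _ /andP [].
have : e x y' by case/and4P: xya' => _ _ /andP [].
rewrite (deg1_nbrs dx exy) inE => /eqP y'y; rewrite y'y in xya' end_a' *.
by rewrite (path_deg2_internal_unique e_sym xya end_a xya' end_a').
Qed.

Lemma leaf_segment e x q s : symmetric e -> deg e x = 1 -> chain e (x :: q) ->
  is_segment e s -> x \in s -> s = orient (x :: q).
Proof.
move=> e_sym dx xq s_seg x_s; have s_chain := segment_chain s_seg.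
rewrite -(segment_orient_id s_seg).
case: s x_s s_seg s_chain => [|h q'] // x_s _ hq'.
have : (x == h) || (x == last h q').
  case/and3P: hq' => /and4P [_ _ _ /allP /(_ x x_s)].
  by rewrite dx orbF.
case/orP=> /eqP x_end.
  by rewrite -x_end in hq' *; rewrite (leaf_chain_unique e_sym dx hq' xq).
rewrite -(orient_rev hq'); move: (chain_rev e_sym hq').
rewrite rev_cons_belast -x_end => rq.
by rewrite (leaf_chain_unique e_sym dx rq xq).
Qed.

Lemma segments_at_leaves e x1 c1 x2 c2 z : symmetric e ->
  deg e x1 = 1 -> chain e (x1 :: c1) -> deg e x2 = 1 -> chain e (x2 :: c2) ->
  deg e z = 2 -> e z x1 ->
  forall s, is_segment e s && [|| x1 \in s, x2 \in s | z \in s] =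
            (s \in [:: orient (x1 :: c1); orient (x2 :: c2)]).
Proof.
move=> e_sym d1 ch1 d2 ch2 dz ezx s; apply/idP/idP.
  case/andP=> s_seg /or3P [x1_s | x2_s | z_s].
  - by rewrite (leaf_segment e_sym d1 ch1 s_seg x1_s) mem_head.
  - by rewrite (leaf_segment e_sym d2 ch2 s_seg x2_s) !inE eqxx orbT.
  - have x1_s := chain_deg2_closed e_sym (segment_chain s_seg) z_s dz ezx.
    by rewrite (leaf_segment e_sym d1 ch1 s_seg x1_s) mem_head.
by rewrite !inE => /orP [] /eqP ->; rewrite orient_segment // !mem_orient mem_head ?orbT.
Qed.

Lemma num_segments_eq_local e1 e2 (touch : pred (seq 'I_n)) L1 L2 k :
  (forall s, ~~ touch s -> is_segment e1 s = is_segment e2 s) ->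
  (forall s, is_segment e1 s && touch s = (s \in L1)) ->
  (forall s, is_segment e2 s && touch s = (s \in L2)) ->
  uniq L1 -> uniq L2 -> size L1 = size L2 ->
  num_segments_eq e1 k -> num_segments_eq e2 k.
Proof.
move=> far segs1 segs2 L1_uniq L2_uniq size_L [S [S_uniq S_mem S_size]].
exists ([seq s <- S | ~~ touch s] ++ L2); split.
- rewrite cat_uniq filter_uniq // L2_uniq andbT; apply/hasPn => s.
  by rewrite -segs2 mem_filter => /andP [_ ->].
- move=> s; rewrite mem_cat mem_filter S_mem -segs2.
  by case: (boolP (touch s)) => [_|/far ->]; rewrite ?andbT ?andbF ?orbF.
have touch_L1 : perm_eq [seq s <- S | touch s] L1.
  by apply: uniq_perm; rewrite ?filter_uniq // => s; rewrite mem_filter S_mem andbC.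
rewrite size_cat size_filter -size_L -(perm_size touch_L1) size_filter addnC.
by rewrite count_predC.
Qed.

Lemma eq_in_path_deg2_internal e1 e2 x q : {in x :: q &, e1 =2 e2} ->
  (forall v, v \in q -> v != x -> v != last x q -> deg e1 v = deg e2 v) ->
  path_deg2_internal e1 (x :: q) = path_deg2_internal e2 (x :: q).
Proof.
move=> E D; have all_xq : all (mem (x :: q)) (x :: q) by apply/allP.
rewrite /path_deg2_internal (eq_in_path E all_xq).
have ends_eq : {in x :: q, (fun v => (v == x) || (v == last x q) || (deg e1 v == 2)) =1
                          (fun v => (v == x) || (v == last x q) || (deg e2 v == 2))}.
  move=> v; rewrite in_cons /=.
  by case: (eqVneq v x) => //= vx v_q; case: (eqVneq v (last x q)) => //= vl; rewrite D.
by rewrite (eq_in_all ends_eq).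
Qed.

Lemma eq_in_is_segment e1 e2 s : {in s &, e1 =2 e2} -> {in s, deg e1 =1 deg e2} ->
  is_segment e1 s = is_segment e2 s.
Proof.
case: s => [|x q] // E D; rewrite /is_segment (eq_in_path_deg2_internal E) => [|v v_q _ _].
  by rewrite D ?mem_head // D ?mem_last.
exact/D/mem_behead.
Qed.

Definition regraft e a b : rel 'I_n :=
  fun x y => if x == a then y == b else if y == a then x == b else e x y.

Lemma regraft_leaf e a b y : regraft e a b a y = (y == b).
Proof. by rewrite /regraft eqxx. Qed.

Lemma regraft_id e a b x y : x != a -> y != a -> regraft e a b x y = e x y.
Proof. by rewrite /regraft => /negbTE -> /negbTE ->. Qed.

Lemma regraft_sym e a b : symmetric e -> symmetric (regraft e a b).
Proof.
move=> e_sym x y; rewrite /regraft /=.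
by case: (x =P a) => [xa | _]; case: (y =P a) => [ya | _]; subst; rewrite ?eqxx.
Qed.

Lemma regraft_irr e a b : irreflexive e -> b != a -> irreflexive (regraft e a b).
Proof.
move=> e_irr ba x; rewrite /regraft.
by case: (eqVneq x a) => [->|//]; rewrite eq_sym (negbTE ba).
Qed.

Lemma regraft_deg_other e a b x : x != a -> x != b -> ~~ e x a ->
  deg (regraft e a b) x = deg e x.
Proof.
move=> xa xb not_exa; apply: eq_deg => y; rewrite /regraft (negbTE xa) (negbTE xb).
by case: eqP => // ->; rewrite (negbTE not_exa).
Qed.

Lemma regraft_connected e a b : symmetric e -> connected e -> deg e a = 1 -> b != a ->
  connected (regraft e a b).
Proof.
move=> e_sym e_conn da ba.
have avoid_a x y : x != a -> y != a -> connect (regraft e a b) x y.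
  move=> xa ya; case/connectP: (e_conn x y) => p xp y_end.
  case/shortenP: xp y_end => p' xp' xp'_uniq _ y_end; apply/connectP; exists p' => //.
  have all_not_a : all (predC1 a) (x :: p').
    apply/allP => z; rewrite in_cons => /orP [/eqP -> // | z_p'] /=.
    apply: contraTneq z_p' => ->; apply/negP => a_p'.
    by move: ya; rewrite y_end -(leaf_path_end e_sym xp' xp'_uniq da a_p') eqxx.
  have e_out : {in predC1 a &, e =2 regraft e a b}.
    by move=> u v ua va; rewrite regraft_id.
  by rewrite -(eq_in_path e_out all_not_a).
have eab : regraft e a b a b by rewrite regraft_leaf.
have eba : regraft e a b b a by rewrite regraft_sym.
move=> x y; case: (eqVneq x a) => [->|xa]; case: (eqVneq y a) => [->|ya].
- exact: connect0.
- exact: connect_trans (connect1 eab) (avoid_a _ _ ba ya).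
- exact: connect_trans (avoid_a _ _ xa ba) (connect1 eba).
- exact: avoid_a.
Qed.

Lemma regraft_acyclic e a b : acyclic e -> b != a -> acyclic (regraft e a b).
Proof.
move=> e_acyc ba c c_uniq c_size; apply/negP => c_cycle.
case: (boolP (a \in c)) => [a_c | a_c].
  case/rot_to: a_c => i s' c_rot.
  have : cycle (regraft e a b) (a :: s') by rewrite -c_rot rot_cycle.
  have : uniq (a :: s') by rewrite -c_rot rot_uniq.
  have : 3 <= size (a :: s') by rewrite -c_rot size_rot.
  case: s' {c_rot} => [|y [|y' s']] //= _ /and3P [a_ys y_s _].
  rewrite rcons_path regraft_leaf => /and3P [/eqP yb _ /andP [_]].
  have last_a : last y' s' != a.
    by apply: contraNneq a_ys => <-; rewrite inE mem_last orbT.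
  rewrite /regraft (negbTE last_a) eqxx => /eqP last_b.
  by move: y_s; rewrite yb -last_b mem_last.
have all_not_a : all (predC1 a) c by apply/allP => z z_c /=; apply: contraNneq a_c => <-.
have e_out : {in predC1 a &, e =2 regraft e a b}.
  by move=> u v ua va; rewrite regraft_id.
by have := e_acyc c c_uniq c_size; rewrite (eq_in_cycle e_out all_not_a) c_cycle.
Qed.

Definition M2_term e u v : nat := if e u v then deg e u * deg e v else 0.

Lemma M2_term_sym e : symmetric e -> forall u v, M2_term e u v = M2_term e v u.
Proof. by move=> e_sym u v; rewrite /M2_term e_sym mulnC. Qed.

Lemma M2_double e : symmetric e -> irreflexive e -> 2 * M2 e = \sum_u \sum_v M2_term e u v.
Proof.
move=> e_sym e_irr.
have M2E : M2 e =
    \sum_(u : 'I_n) \sum_(v : 'I_n) (if (u < v)%N && e u v then deg e u * deg e v else 0).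
  by apply: eq_bigr => u _; rewrite big_mkcond.
rewrite mul2n -addnn M2E [X in _ + X]exchange_big -big_split /=.
apply: eq_bigr => u _; rewrite -big_split; apply: eq_bigr => v _ /=.
rewrite /M2_term (e_sym v u); case: ltngtP => [uv | vu | /val_inj ->].
- by rewrite addn0.
- by rewrite add0n mulnC.
- by rewrite e_irr.
Qed.

Lemma sum_M2_term_nbrs e x s (P : pred 'I_n) : uniq s -> (forall y, e x y = (y \in s)) ->
  \sum_(y | P y) M2_term e x y = \sum_(y <- s | P y) deg e x * deg e y.
Proof.
move=> s_uniq nbrs; rewrite -[RHS]big_filter big_uniq ?filter_uniq //.
by rewrite /M2_term -big_mkcondr; apply: eq_bigl => y; rewrite mem_filter nbrs.
Qed.
End Graphs.

Lemma sum_sym_split (I : finType) (g : I -> I -> nat) (A : seq I) :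
  uniq A -> (forall x y, g x y = g y x) ->
  \sum_x \sum_y g x y = \sum_(x | x \notin A) \sum_(y | y \notin A) g x y +
                        \sum_(x <- A) (\sum_y g x y + \sum_(y | y \notin A) g x y).
Proof.
move=> A_uniq g_sym.
have splitA F : \sum_x F x = \sum_(x <- A) F x + \sum_(x | x \notin A) F x.
  by rewrite (bigID (mem A)) big_uniq.
rewrite splitA big_split /= addnCA; congr (_ + _).
rewrite (eq_bigr _ (fun x _ => splitA (g x))) big_split /= addnC; congr (_ + _).
by rewrite exchange_big; apply: eq_bigr => x _; apply: eq_bigr => y _; apply: g_sym.
Qed.

Section LongPendentPath.
Variables (n : nat) (T : rel 'I_n) (u0 u1 u2 u3 w v : 'I_n) (r : seq 'I_n).
Hypotheses (T_sym : symmetric T) (T_irr : irreflexive T).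
Hypothesis P_pendent : is_pendent_path T [:: u0, u1, u2, u3 & r].
Hypotheses (w_leaf : deg T w = 1) (T_wv : T w v) (v_branch : 2 < deg T v).

Local Notation T' := (regraft T u0 w).
Local Notation ur := (last u3 r).
Local Notation A := [:: u0; u1; w].

Let P_path : path_deg2_internal T [:: u0, u1, u2, u3 & r].
Proof. by case/and3P: P_pendent. Qed.

Let d0 : deg T u0 = 1.
Proof. by case/and3P: P_pendent => _ /eqP. Qed.

Let dr : 2 < deg T ur.
Proof. by case/and3P: P_pendent. Qed.

Let d1 : deg T u1 = 2. Proof. exact: path_deg2_internal_second_deg P_path. Qed.
Let d2 : deg T u2 = 2.
Proof. exact: path_deg2_internal_second_deg (path_deg2_internal_behead P_path). Qed.

Let e01 : T u0 u1. Proof. by case/and4P: P_path => _ _ /andP []. Qed.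
Let e12 : T u1 u2. Proof. by case/and4P: P_path => _ _ /and3P []. Qed.
Let e10 : T u1 u0. Proof. by rewrite T_sym. Qed.

Let P_uniq : uniq [:: u0, u1, u2, u3 & r].
Proof. by case/and4P: P_path. Qed.

Let neq_deg x y : deg T x != deg T y -> x != y.
Proof. exact: deg_neq. Qed.

Let neq_branch x y : deg T x <= 2 -> 2 < deg T y -> x != y.
Proof. by move=> dx dy; apply: neq_deg; rewrite neq_ltn (leq_ltn_trans dx dy). Qed.

Let u0u1 : u0 != u1. Proof. by apply: neq_deg; rewrite d0 d1. Qed.
Let u0u2 : u0 != u2. Proof. by apply: neq_deg; rewrite d0 d2. Qed.
Let u1u2 : u1 != u2.
Proof.
by case/and3P: P_uniq => _ u1_notin _; apply: contraNneq u1_notin => ->; apply: mem_head.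
Qed.
Let u1w : u1 != w. Proof. by apply: neq_deg; rewrite d1 w_leaf. Qed.
Let u2w : u2 != w. Proof. by apply: neq_deg; rewrite d2 w_leaf. Qed.
Let u0v : u0 != v. Proof. by apply: neq_branch; rewrite ?d0. Qed.
Let u1v : u1 != v. Proof. by apply: neq_branch; rewrite ?d1. Qed.
Let wv : w != v. Proof. by apply: neq_branch; rewrite ?w_leaf. Qed.
Let u0_ur : u0 != ur. Proof. by apply: neq_branch; rewrite ?d0. Qed.
Let u1_ur : u1 != ur. Proof. by apply: neq_branch; rewrite ?d1. Qed.
Let w_ur : w != ur. Proof. by apply: neq_branch; rewrite ?w_leaf. Qed.

Let u0_nbrs y : T u0 y = (y \in [:: u1]). Proof. exact: deg1_nbrs d0 e01 y. Qed.
Let w_nbrs y : T w y = (y \in [:: v]). Proof. exact: deg1_nbrs w_leaf T_wv y. Qed.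
Let u1_nbrs y : T u1 y = (y \in [:: u0; u2]).
Proof. exact: deg2_nbrs d1 e10 e12 u0u2 y. Qed.

Let wu0 : w != u0.
Proof. by apply: contraTneq T_wv => ->; rewrite u0_nbrs inE eq_sym (negbTE u1v). Qed.

Let T'_u0 y : T' u0 y = (y \in [:: w]). Proof. by rewrite regraft_leaf inE. Qed.

Let T'_u1 y : T' u1 y = (y \in [:: u2]).
Proof.
rewrite /regraft eq_sym (negbTE u0u1) (negbTE u1w) u1_nbrs !inE.
by have [->|//] := eqVneq y u0; apply/esym/negbTE.
Qed.

Let T'_w y : T' w y = (y \in [:: v; u0]).
Proof.
rewrite /regraft (negbTE wu0) eqxx w_nbrs !inE.
by case: eqP => [->|]; rewrite ?orbT ?orbF.
Qed.

Let T'_deg x : x \notin A -> deg T' x = deg T x.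
Proof.
rewrite !inE !negb_or => /and3P [xu0 xu1 xw]; apply: regraft_deg_other => //.
by rewrite T_sym u0_nbrs inE.
Qed.

Let D'0 : deg T' u0 = 1. Proof. exact: deg_nbrs T'_u0. Qed.
Let D'1 : deg T' u1 = 1. Proof. exact: deg_nbrs T'_u1. Qed.
Let D'w : deg T' w = 2.
Proof. by apply: deg_nbrs T'_w; rewrite /= inE andbT; apply: contraNneq u0v => ->. Qed.

Let P_chain : chain T [:: u0, u1, u2, u3 & r].
Proof. by apply/and3P; split; rewrite //= ?d0 // neq_ltn dr orbT. Qed.

Let Q_chain : chain T [:: w; v].
Proof.
by rewrite /= !inE eqxx T_wv w_leaf wv (eqxx v) orbT /= neq_ltn v_branch orbT.
Qed.

Let u0_tail : u0 \notin [:: u1, u2, u3 & r].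
Proof. by case/andP: P_uniq. Qed.

Let A_notin x : x != u0 -> x != u1 -> x != w -> x \notin A.
Proof. by move=> xu0 xu1 xw; rewrite !inE !negb_or xu0 xu1 xw. Qed.

Let P'_chain : chain T' [:: u1, u2, u3 & r].
Proof.
have not_u0 x : x \in [:: u1, u2, u3 & r] -> x != u0.
  by move=> x_in; apply: contraNneq u0_tail => <-.
have ur_A : ur \notin A by rewrite A_notin // eq_sym.
apply/and3P; split; last by rewrite /= T'_deg // neq_ltn dr orbT.
  rewrite (eq_in_path_deg2_internal (e2 := T)) => [|x y x_in y_in|x x_in xu1 xur].
  - exact: path_deg2_internal_behead P_path.
  - by rewrite regraft_id ?not_u0.
  have x_P : x \in [:: u1, u2, u3 & r] by rewrite inE x_in orbT.
  have dx : deg T x = 2 by apply: (path_deg2_internal_inner_deg P_path); rewrite ?not_u0.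
  rewrite T'_deg // A_notin ?not_u0 //.
  by apply: neq_deg; rewrite dx w_leaf.
by rewrite D'1.
Qed.

Let D'v : deg T' v = deg T v.
Proof. by rewrite T'_deg // A_notin // eq_sym. Qed.

Let Q'_chain : chain T' [:: u0; w; v].
Proof.
rewrite /= !inE T'_u0 T'_w D'0 D'w D'v (eq_sym u0 w) (negbTE wu0) (negbTE u0v) wv.
by rewrite ?eqxx ?orbT /= !inE !eqxx /= neq_ltn v_branch orbT.
Qed.

Lemma regraft_chemical_tree : chemical_tree T -> chemical_tree T'.
Proof.
case=> [[_ T_conn T_acyc] T_deg4]; split; first split.
- by split; [apply: regraft_sym | apply: regraft_irr].
- exact: regraft_connected.
- exact: regraft_acyclic.
move=> x; case: (boolP (x \in A)) => [|/T'_deg -> //].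
by rewrite !inE => /or3P [] /eqP ->; rewrite ?D'0 ?D'1 ?D'w.
Qed.

Lemma regraft_num_segments k : num_segments_eq T k -> num_segments_eq T' k.
Proof.
apply: (@num_segments_eq_local _ _ _ (fun s => [|| u0 \in s, u1 \in s | w \in s])
          [:: orient [:: u0, u1, u2, u3 & r]; orient [:: w; v]]
          [:: orient [:: u0; w; v]; orient [:: u1, u2, u3 & r]]) => //.
- move=> s; rewrite !negb_or => /and3P [s_u0 s_u1 s_w].
  have neq_out x y : x \in s -> y \notin s -> x != y.
    by move=> x_s y_s; apply: contraNneq y_s => <-.
  apply: esym; apply: eq_in_is_segment => [x y x_s y_s|x x_s].
    by rewrite regraft_id ?(neq_out _ _ _ s_u0).
  by rewrite T'_deg // A_notin ?(neq_out _ _ x_s).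
- move=> s; rewrite -(segments_at_leaves T_sym d0 P_chain w_leaf Q_chain d1 e10).
  by rewrite (orbC (w \in s)).
- have ew0 : T' w u0 by rewrite T'_w !inE eqxx orbT.
  move=> s; exact: segments_at_leaves (regraft_sym u0 w T_sym) D'0 Q'_chain D'1 P'_chain D'w ew0 s.
- have u0_Q : u0 \notin orient [:: w; v].
    by rewrite mem_orient !inE negb_or eq_sym wu0.
  apply/andP; split=> //; rewrite inE.
  by apply: contraNneq u0_Q => <-; rewrite mem_orient mem_head.
have u0_P' : u0 \notin orient [:: u1, u2, u3 & r] by rewrite mem_orient.
apply/andP; split=> //; rewrite inE.
by apply: contraNneq u0_P' => <-; rewrite mem_orient mem_head.
Qed.

Let A_uniq : uniq A.
Proof. by rewrite /= !inE negb_or u0u1 andbT /=; apply/andP; split; rewrite // eq_sym. Qed.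

Let M2_terms_far : \sum_(x | x \notin A) \sum_(y | y \notin A) M2_term T' x y =
                   \sum_(x | x \notin A) \sum_(y | y \notin A) M2_term T x y.
Proof.
apply: eq_bigr => x x_A; apply: eq_bigr => y y_A.
have notin_u0 z : z \notin A -> z != u0 by rewrite !inE !negb_or => /and3P [].
by rewrite /M2_term !T'_deg // regraft_id ?notin_u0.
Qed.

Lemma regraft_M2E : M2 T' + 2 = M2 T + deg T v.
Proof.
have T'_sym := regraft_sym u0 w T_sym.
have T'_irr := regraft_irr T_irr wu0.
apply/eqP; rewrite -(eqn_pmul2l (_ : 0 < 2)) // !mulnDr !M2_double //.
rewrite (sum_sym_split A_uniq (M2_term_sym T_sym)).
rewrite (sum_sym_split A_uniq (M2_term_sym T'_sym)) M2_terms_far !big_cons big_nil.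
have uniq_u0u2 : uniq [:: u0; u2] by rewrite /= inE u0u2.
have uniq_vu0 : uniq [:: v; u0] by rewrite /= inE andbT eq_sym u0v.
rewrite !(sum_M2_term_nbrs _ _ u0_nbrs) // !(sum_M2_term_nbrs _ _ u1_nbrs) //.
rewrite !(sum_M2_term_nbrs _ _ w_nbrs) // !(sum_M2_term_nbrs _ _ T'_u0) //.
rewrite !(sum_M2_term_nbrs _ _ T'_u1) // !(sum_M2_term_nbrs _ _ T'_w) //.
have u0_A : u0 \in A by rewrite mem_head.
have u1_A : u1 \in A by rewrite !inE eqxx orbT.
have w_A : w \in A by apply: (mem_last u0 [:: u1; w]).
have u2_A : u2 \notin A by rewrite A_notin // eq_sym.
have v_A : v \notin A by rewrite A_notin // eq_sym.
have D'2 : deg T' u2 = 2 by rewrite T'_deg.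
rewrite !big_cons !big_nil /= u0_A u1_A w_A u2_A v_A /=.
rewrite d0 d1 d2 w_leaf D'0 D'1 D'2 D'w D'v.
rewrite -!addnA eqn_add2l; apply/eqP; move: (deg T v) => dv; clear; lia.
Qed.

Lemma regraft_CT k : CT T k -> CT T' k.
Proof.
by case=> T_chem T_segs; split; [apply: regraft_chemical_tree | apply: regraft_num_segments].
Qed.
End LongPendentPath.

Theorem lemma4 (n k : nat) (T : rel 'I_n) :
  3 <= k <= n - 1 ->
  CT T k ->
  (forall T' : rel 'I_n, CT T' k -> M2 T' <= M2 T) ->
  (exists u v : 'I_n, [/\ deg T u = 1, T u v & 2 < deg T v]) ->
  forall p : seq 'I_n, is_pendent_path T p -> size p - 1 <= 2.
Proof.
move=> _ T_CT T_max [w [v [w_leaf T_wv v_branch]]].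
case=> [|u0 [|u1 [|u2 [|u3 r]]]] // P_pendent.
have [[[[T_sym T_irr] _ _] _] _] := T_CT.
have := T_max _ (regraft_CT T_sym T_irr P_pendent w_leaf T_wv v_branch T_CT).
have := regraft_M2E T_sym T_irr P_pendent w_leaf T_wv v_branch.
lia.
Qed.
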